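(* The family of induced paw-free graphs is feasible: for every integer $n \geq 1$ and every integer $m$ with $0 \leq m \leq \binom{n}{2}$, there exists a graph with $n$ vertices and $m$ edges containing no induced paw.
   Context: All graphs are finite and simple. The paw is the graph consisting of a triangle $K_3$ together with one additional vertex joined by an edge to exactly one vertex of the triangle. A graph is induced paw-free if it has no induced subgraph isomorphic to the paw. *)

From mathcomp Require Import all_boot.
Set Implicit Arguments. Unset Strict Implicit. Unset Printing Implicit Defensive.

Record simple_graph (V : finType) := SimpleGraph {
  adj : rel V;
  adj_sym : symmetric adj;
  adj_irrefl : irreflexive adj }.

Definition edges (V : finType) (G : simple_graph V) : {set {set V}} :=
  [set E : {set V} | [exists x, exists y, (E == [set x; y]) && adj G x y]].

(* G contains an induced paw: distinct a b c d, where a b c form a triangle,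
   d is adjacent to a and to neither b nor c (this is exactly the induced
   subgraph on {a,b,c,d} being isomorphic to the paw). *)
Definition has_induced_paw (V : finType) (G : simple_graph V) : bool :=
  [exists a, exists b, exists c, exists d,
     [&& uniq [:: a; b; c; d],
         adj G a b, adj G b c, adj G a c,
         adj G d a, ~~ adj G d b & ~~ adj G d c]].

Definition induced_paw_free (V : finType) (G : simple_graph V) : bool :=
  ~~ has_induced_paw G.

From mathcomp Require Import all_boot zify.
Set Implicit Arguments. Unset Strict Implicit. Unset Printing Implicit Defensive.

(* A complete multipartite graph on the first K vertices, all other vertices
   isolated, has no induced paw: the pendant vertex d is adjacent to neither b
   nor c, so it has the colour of both, contradicting b ~ c.  With q colour
   classes of size 2, one of size p and singletons otherwise, such a graph
   misses exactly C(p,2) + q of the C(K,2) possible edges.  Given m <= C(n,2),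
   pick k with C(k,2) <= m < C(k,2) + k; if m > C(k,2), put K = k + 1 and write
   the number C(K,2) - m < k of missing edges greedily as C(p,2) + q with
   q < p, which leaves room for the classes: 2q + p <= K. *)

Section LowerNeighbourhoods.

Variables (n : nat) (G : simple_graph 'I_n).

Lemma card_edges_lower_nbhd :
  #|edges G| = \sum_(y : 'I_n) #|[set x : 'I_n | (x < y) && adj G x y]|.
Proof.
pose S := [set u : 'I_n * 'I_n | (u.2 < u.1) && adj G u.2 u.1].
pose pair_of (u : 'I_n * 'I_n) := [set u.2; u.1].
have -> : edges G = pair_of @: S.
  apply/setP => E; rewrite /edges inE; apply/idP/idP.
  - case/existsP => x /existsP [y /andP [/eqP -> Gxy]].
    have [xy|yx|xy] := ltngtP x y.
    + by apply/imsetP; exists (y, x); rewrite // inE /= xy.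
    + apply/imsetP; exists (x, y); first by rewrite inE /= yx adj_sym.
      by rewrite /pair_of /= setUC.
    + by move: Gxy; rewrite (val_inj xy) adj_irrefl.
  - case/imsetP => u; rewrite inE => /andP [_ Gu] ->.
    by apply/existsP; exists u.2; apply/existsP; exists u.1; rewrite eqxx Gu.
rewrite card_in_imset; last first.
  move=> [a b] [c d]; rewrite !inE /pair_of /= => /andP [+ _] /andP [+ _] E.
  have : b \in [set d; c] by rewrite -E !inE eqxx.
  have : a \in [set d; c] by rewrite -E !inE eqxx orbT.
  by rewrite !inE => /orP [] /eqP -> /orP [] /eqP -> // *; exfalso; lia.
rewrite -sum1_card (eq_bigl (fun u : 'I_n * 'I_n =>
  predT u.1 && ((u.2 < u.1) && adj G u.2 u.1))); last by move=> u; rewrite inE.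
rewrite -(pair_big_dep predT (fun y x : 'I_n => (x < y) && adj G x y)
  (fun _ _ => 1)).
by apply: eq_bigr => y _; rewrite -sum1_card; apply: eq_bigl => x; rewrite inE.
Qed.

Lemma card_ord_lt k : k <= n -> #|[set x : 'I_n | x < k]| = k.
Proof.
move=> kn.
have -> : [set x : 'I_n | x < k] = widen_ord kn @: [set: 'I_k].
  apply/setP => x; rewrite inE; apply/idP/imsetP.
  - by move=> xk; exists (Ordinal xk) => //; apply: val_inj.
  - by case=> y _ ->; rewrite /= ltn_ord.
by rewrite card_imset ?cardsT ?card_ord // => a b [] /val_inj.
Qed.

Lemma card_edges_initial_lower_nbhd (deg : nat -> nat) :
  (forall y : 'I_n, deg y <= y) ->
  (forall x y : 'I_n, (x < y) && adj G x y = (x < deg y)) ->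
  #|edges G| = \sum_(y < n) deg y.
Proof.
move=> deg_le lower_nbhd; rewrite card_edges_lower_nbhd; apply: eq_bigr => y _.
have -> : [set x : 'I_n | (x < y) && adj G x y] = [set x : 'I_n | x < deg y].
  by apply/setP => x; rewrite !inE lower_nbhd.
by rewrite card_ord_lt // (leq_trans (deg_le y)) // ltnW.
Qed.

End LowerNeighbourhoods.

Section CompleteMultipartite.

Variables (n K : nat) (colour : nat -> nat).

Definition multipartite_adj : rel 'I_n :=
  fun x y => [&& x < K, y < K & colour x != colour y].

Lemma multipartite_adj_sym : symmetric multipartite_adj.
Proof. by move=> x y; rewrite /multipartite_adj andbCA eq_sym. Qed.

Lemma multipartite_adj_irrefl : irreflexive multipartite_adj.
Proof. by move=> x; rewrite /multipartite_adj eqxx !andbF. Qed.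

Definition multipartite_graph :=
  SimpleGraph multipartite_adj_sym multipartite_adj_irrefl.

Lemma multipartite_paw_free : induced_paw_free multipartite_graph.
Proof.
apply/negP => /existsP [a /existsP [b /existsP [c /existsP [d]]]].
case/and5P => _ _ /and3P [bK cK /eqP bc] _ /and3P [/and3P [dK _ _]].
rewrite /= /multipartite_adj dK bK cK /= !negbK => /eqP db /eqP dc.
by apply: bc; rewrite -db -dc.
Qed.

End CompleteMultipartite.

Lemma sum_odd_double q : \sum_(0 <= y < q.*2) odd y = q.
Proof.
elim: q => [|q IHq]; first by rewrite big_geq.
rewrite doubleS big_nat_recr // big_nat_recr /= ?IHq ?odd_double; lia.
Qed.

Section PairsAndBlock.

Variables (K p q : nat).

Definition pair_block_colour (y : nat) : nat :=
  if y < q.*2 then y./2 else if y < q.*2 + p then q else y.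

(* Colour classes are intervals, so the lower neighbours of a vertex y < K are
   exactly the vertices before its class, and lower_degree y is the first
   vertex of that class. *)
Definition lower_degree (y : nat) : nat :=
  if K <= y then 0
  else if y < q.*2 then (y./2).*2
  else if y < q.*2 + p then q.*2
  else y.

Lemma lower_degree_le y : lower_degree y <= y.
Proof.
rewrite /lower_degree; case: ifP => // _; case: ifP => [_|/negbT]; last first.
  by case: ifP => //; lia.
by have := odd_double_half y; lia.
Qed.

Lemma lower_adj_pair_block x y :
  (x < y) && [&& x < K, y < K & pair_block_colour x != pair_block_colour y]
  = (x < lower_degree y).
Proof.
rewrite /lower_degree /pair_block_colour.
case: (leqP K y) => yK; first by rewrite andbF andbF; case: ltnP => //= xy; lia.
case: (ltnP y q.*2) => y2q.
  rewrite -[x < _ in RHS]ltn_half_double; case: (ltnP x y) => xy /=.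
    have xK : x < K by lia.
    rewrite xK /= (_ : x < q.*2) ?ltn_neqAle ?half_leq ?andbT //.
    - exact: ltnW.
    - lia.
  by apply/esym/negbTE; rewrite -leqNgt half_leq.
case: (ltnP y (q.*2 + p)) => y2qp.
  case: (ltnP x q.*2) => x2q.
    have -> : x < y by lia.
    have -> : x < K by lia.
    by rewrite /= neq_ltn ltn_half_double x2q.
  case: (ltnP x y) => xy //=.
  by rewrite (_ : x < q.*2 + p) ?eqxx ?andbF //; lia.
case: (ltnP x y) => xy /=; last by lia.
have -> : x < K by lia.
case: ifP => x2q.
  by apply/negP => /eqP E; have := half_leq (ltnW xy); lia.
by case: ifP => x2qp; apply/negP => /eqP E; lia.
Qed.

Lemma sum_defect_lower_degree :
  q.*2 + p <= K -> \sum_(0 <= y < K) (y - lower_degree y) = q + 'C(p, 2).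
Proof.
move=> hK.
rewrite (big_cat_nat (leq0n q.*2) (leq_trans (leq_addr p _) hK)) /=.
rewrite (big_cat_nat (leq_addr p _) hK) /=.
rewrite [X in _ + (_ + X)]big_nat [X in _ + (_ + X)]big1 ?addn0; last first.
  move=> y /andP [y2qp yK]; rewrite /lower_degree leqNgt yK /=.
  by rewrite ltnNge (leq_trans (leq_addr p _) y2qp) /= ltnNge y2qp subnn.
congr (_ + _).
  rewrite -[RHS](sum_odd_double q); apply: eq_big_nat => y /andP [_ y2q].
  rewrite /lower_degree ifF; last lia.
  by rewrite y2q; have := odd_double_half y; lia.
rewrite -[X in \sum_(X <= _ < _) _]add0n big_addn addKn -bin2_sum.
apply: eq_big_nat => y /andP [_ yp].
rewrite /lower_degree ifF; last lia.
rewrite ifF; last lia.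
rewrite ifT; lia.
Qed.

End PairsAndBlock.

Lemma card_edges_pair_block n K p q : K <= n -> q.*2 + p <= K ->
  #|edges (multipartite_graph n K (pair_block_colour p q))| + 'C(p, 2) + q
  = 'C(K, 2).
Proof.
move=> Kn hK.
rewrite (@card_edges_initial_lower_nbhd _ _ (lower_degree K p q)); last 2 first.
- by move=> y; apply: lower_degree_le.
- by move=> x y; apply: lower_adj_pair_block.
rewrite -(big_mkord xpredT) (big_cat_nat (leq0n K) Kn) /=.
rewrite [X in _ + X + _ + _]big_nat [X in _ + X + _ + _]big1 ?addn0; last first.
  by move=> y /andP [Ky _]; rewrite /lower_degree Ky.
have split_sum : \sum_(0 <= y < K) y
    = \sum_(0 <= y < K) lower_degree K p q y
      + \sum_(0 <= y < K) (y - lower_degree K p q y).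
  rewrite -big_split; apply: eq_bigr => y _ /=.
  by rewrite subnKC ?lower_degree_le.
by rewrite -(bin2_sum K) split_sum sum_defect_lower_degree // addnAC addnA.
Qed.

Lemma binS2 k : 'C(k.+1, 2) = 'C(k, 2) + k.
Proof. by rewrite binS bin1. Qed.

Lemma bin2_bracket t : exists k, 'C(k, 2) <= t < 'C(k, 2) + k.
Proof.
elim: t => [|t [k /andP [lo hi]]]; first by exists 1.
have [lt_t|ge_t] := ltnP t.+1 ('C(k, 2) + k).
  by exists k; rewrite lt_t andbT leqW.
by exists k.+1; rewrite binS2; lia.
Qed.

Lemma double_le_bin2 p : p.*2 <= 'C(p, 2) + 3.
Proof. by elim: p => [|[|[|p]] IHp] //; rewrite binS2; lia. Qed.

Lemma bin2_decomposition s :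
  exists p q, s = 'C(p, 2) + q /\ q.*2 + p <= s + 2.
Proof.
have [p /andP [lo hi]] := bin2_bracket s.
exists p, (s - 'C(p, 2)); have := double_le_bin2 p; split; lia.
Qed.

Lemma pair_block_parameters n m : 1 <= n -> m <= 'C(n, 2) ->
  exists K p q, [/\ K <= n, q.*2 + p <= K & m + 'C(p, 2) + q = 'C(K, 2)].
Proof.
move=> n_gt0 m_le.
have [k /andP [lo hi]] := bin2_bracket m.
have [Em|ne_m] := eqVneq m 'C(k, 2).
  exists k, 0, 0; split; rewrite ?Em ?addn0 //.
  by rewrite leqNgt; apply/negP => /(leq_bin2l 2); rewrite binS2; lia.
have [p [q [Es hpq]]] := bin2_decomposition ('C(k, 2) + k - m).
exists k.+1, p, q; split; rewrite ?binS2; try lia.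
by rewrite ltnNge; apply/negP => /(leq_bin2l 2); lia.
Qed.

Theorem mainTheorem3 (n m : nat) :
  1 <= n -> m <= 'C(n, 2) ->
  exists G : simple_graph 'I_n, #|edges G| = m /\ induced_paw_free G.
Proof.
move=> n_gt0 m_le.
have [K [p [q [Kn hK Em]]]] := pair_block_parameters n_gt0 m_le.
exists (multipartite_graph n K (pair_block_colour p q)).
split; last exact: multipartite_paw_free.
apply/eqP; rewrite -(eqn_add2r 'C(p, 2)) -(eqn_add2r q).
by rewrite card_edges_pair_block // Em.
Qed.
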